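(* For $n\ge1$ let $\pi_m(n)=\prod_{k=1,\,k\ne m}^{n}\left(1-\frac{m^2}{k^2}\right)$ and $\alpha_m^{(1)}(n)=\frac{1}{m\,\pi_m(n)}$ for $1\le m\le n$. Let $P_{2n}$ be the unique polynomial of degree at most $2n$ interpolating $y(x)=\sin x$ at the points $x=m\pi/2$, $m=-n,\dots,n$. Then $$P_{2n}'(0)=\frac{1}{\pi}\sum_{m=1}^{n}\alpha_m^{(1)}(n)\left(\sin\tfrac{m\pi}{2}-\sin\!\left(-\tfrac{m\pi}{2}\right)\right)=\frac{2}{\pi}\sum_{\substack{0\le j\\ 2j+1\le n}}(-1)^{j}\alpha_{2j+1}^{(1)}(n),$$ and $$\lim_{n\to\infty}P_{2n}'(0)=1=\sin'(0).$$ *)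

From HB Require Import structures.
From mathcomp Require Import all_boot all_order all_algebra.
From mathcomp Require Import all_classical all_reals all_analysis.
Set Implicit Arguments. Unset Strict Implicit. Unset Printing Implicit Defensive.
Import Order.TTheory GRing.Theory Num.Theory.
Local Open Scope ring_scope.

Definition pim {R : realType} (m n : nat) : R :=
  \prod_(1 <= k < n.+1 | k != m) (1 - (m%:R ^+ 2) / (k%:R ^+ 2)).

Definition alpha1 {R : realType} (m n : nat) : R :=
  1 / (m%:R * pim m n).

Definition node {R : realType} (m : int) : R := (m%:~R * pi) / 2.

Definition interp_sin {R : realType} (n : nat) (P : {poly R}) : Prop :=
  (size P <= (2 * n).+1)%N /\
  forall m : int, - (n%:Z) <= m <= n%:Z -> P.[node m] = sin (node m).

(* Write P = E(x^2) + x V(x^2): then P'(0) = V(0), and V, of degree < n, is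
   determined by its values at the nodes (m pi/2)^2, 1 <= m <= n; Lagrange
   interpolation at 0 produces the weights 1/pi_m(n), and sin(m pi/2) is 0 for
   even m and (-1)^j for m = 2j+1.
   For the limit, 2 pi_m(n) c_m(n) = (-1)^(m-1) with c_m(n) = C(2n,n+m)/C(2n,n),
   so P'(0) = 4/pi sum_j (-1)^j c_(2j+1)(n)/(2j+1).  The weights lie in [0,1],
   decrease in m and satisfy 1 - c_m(n) <= m^2/(n+1).  Split the sum at J: the
   head is within 2J^2/(n+1) of the Leibniz partial sum, itself within
   1/(2J+1) of atan 1 = pi/4, and the alternating tail is at most its first
   term 1/(2J+1).  Letting n and then J grow gives P'(0) -> 1. *)

From HB Require Import structures.
From mathcomp Require Import all_boot all_order all_algebra.
From mathcomp Require Import all_classical all_reals all_analysis.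
From mathcomp Require Import ring lra zify.
Set Implicit Arguments.
Unset Strict Implicit.
Unset Printing Implicit Defensive.

Import Order.TTheory GRing.Theory Num.Theory numFieldNormedType.Exports.
Local Open Scope classical_set_scope.
Local Open Scope ring_scope.

Lemma sum_odd_terms (V : nmodType) (F : nat -> V) n :
  (forall i, F (2 * i)%N = 0) ->
  \sum_(1 <= m < n.+1) F m = \sum_(0 <= j < n.+1 | (2 * j + 1 <= n)%N) F (2 * j + 1)%N.
Proof.
move=> Feven.
have halfE K : \sum_(0 <= m < K) F m = \sum_(0 <= j < K./2) F (2 * j + 1)%N.
  elim: K => [|K IH]; first by rewrite !big_geq.
  rewrite big_nat_recr //= IH uphalf_half.
  have -> : F K = F (2 * K./2 + odd K)%N by rewrite mul2n addnC odd_double_half.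
  case: (odd K); last by rewrite addn0 Feven addr0.
  by rewrite add1n big_nat_recr.
have -> : \sum_(1 <= m < n.+1) F m = \sum_(0 <= m < n.+1) F m.
  by rewrite [RHS]big_ltn // (Feven 0%N) add0r.
have n_halves := odd_double_half n.
rewrite halfE (big_nat_widen _ _ n.+1) -?uphalfE uphalf_half; last by case: (odd n) n_halves; lia.
by apply: eq_bigl => j; case: (odd n) n_halves; lia.
Qed.

Definition binom_ratio {R : fieldType} (n m : nat) : R :=
  'C(2 * n, n + m)%:R / 'C(2 * n, n)%:R.

Section BinomRatio.
Variable R : realFieldType.
Implicit Types n m : nat.

Lemma binom_ratio_ge0 n m : 0 <= binom_ratio n m :> R.
Proof. exact: divr_ge0. Qed.

Lemma binom_ratio_gt n m : (n < m)%N -> binom_ratio n m = 0 :> R.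
Proof. by move=> lt_nm; rewrite /binom_ratio bin_small ?mul0r //; lia. Qed.

Lemma binom_ratio0 n : binom_ratio n 0 = 1 :> R.
Proof. by rewrite /binom_ratio addn0 divff // pnatr_eq0 -lt0n bin_gt0; lia. Qed.

Lemma binom_ratioS n m :
  binom_ratio n m.+1 * (n + m).+1%:R = binom_ratio n m * (n - m)%:R :> R.
Proof.
rewrite /binom_ratio mulrAC -natrM mulnC addnS mul_bin_left mulrAC -natrM.
by rewrite mulnC; congr (_%:R / _); congr (_ * _)%N; lia.
Qed.

Lemma binom_ratio_decr n m : binom_ratio n m.+1 <= binom_ratio n m :> R.
Proof.
have pos : 0 < (n + m).+1%:R :> R by rewrite ltr0n.
rewrite -(ler_pM2r pos) binom_ratioS ler_wpM2l ?binom_ratio_ge0 // ler_nat; lia.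
Qed.

Lemma binom_ratio_le1 n m : binom_ratio n m <= 1 :> R.
Proof.
elim: m => [|m IH]; first by rewrite binom_ratio0.
exact: le_trans (binom_ratio_decr n m) IH.
Qed.

Lemma one_sub_binom_ratio n m : 1 - binom_ratio n m <= (m ^ 2)%:R / n.+1%:R :> R.
Proof.
elim: m => [|m IH]; first by rewrite binom_ratio0 subrr mul0r.
have pos : 0 < (n + m).+1%:R :> R by rewrite ltr0n.
have step : binom_ratio n m - binom_ratio n m.+1 <= (2 * m + 1)%:R / n.+1%:R :> R.
  apply: (@le_trans _ _ ((2 * m + 1)%:R / (n + m).+1%:R)); last first.
    by rewrite ler_wpM2l // lef_pV2 ?posrE ?ltr0n // ler_nat; lia.
  rewrite ler_pdivlMr // mulrBl binom_ratioS -mulrBr -natrB; last by lia.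
  apply: le_trans (ler_piMl _ (binom_ratio_le1 n m)) _.
    by rewrite ler0n.
  by rewrite ler_nat; lia.
have -> : (m.+1 ^ 2)%:R / n.+1%:R = (m ^ 2)%:R / n.+1%:R + (2 * m + 1)%:R / n.+1%:R :> R.
  by rewrite -mulrDl -natrD; congr (_%:R / _); lia.
by have := lerD IH step; rewrite addrA subrK.
Qed.

Lemma binom_ratioE n m : (m <= n)%N ->
  binom_ratio n m = n`!%:R ^+ 2 / ((n - m)`!%:R * (n + m)`!%:R) :> R.
Proof.
move=> mn; have fact_neq0 k : k`!%:R != 0 :> R by rewrite pnatr_eq0 -lt0n fact_gt0.
have central := @bin_fact (2 * n) n ltac:(lia).
have side := @bin_fact (2 * n) (n + m) ltac:(lia).
rewrite (_ : 2 * n - n = n)%N ?mulnn in central; last by lia.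
rewrite (_ : 2 * n - (n + m) = n - m)%N in side; last by lia.
have C_neq0 : 'C(2 * n, n)%:R != 0 :> R by rewrite pnatr_eq0 -lt0n bin_gt0; lia.
rewrite /binom_ratio; apply/eqP; rewrite eqr_div ?mulf_neq0 //.
by rewrite -natrX -!natrM eqr_nat; apply/eqP; nia.
Qed.

End BinomRatio.

Lemma one_sub_sqr_ratio (F : fieldType) (x y : F) :
  y != 0 -> 1 - x ^+ 2 / y ^+ 2 = (y - x) * (y + x) / y ^+ 2.
Proof. by move=> y0; field. Qed.

Section PiClosedForm.
Variable R : realType.
Implicit Types m n : nat.

Lemma pim_neq0 m n : pim m n != 0 :> R.
Proof.
rewrite /pim prodf_seq_neq0; apply/allP => k; rewrite mem_index_iota => /andP[k_gt0 _].
apply/implyP => km; have k_neq0 : k%:R ^+ 2 != 0 :> R by rewrite expf_neq0 // pnatr_eq0 -lt0n.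
rewrite subr_eq0 eq_sym; apply: contra km => /eqP /(congr1 ( *%R^~ (k%:R ^+ 2))).
by rewrite divfK // mul1r => /eqP; rewrite -!natrX eqr_nat eqn_sqr eq_sym.
Qed.

Lemma pimS m n : m != n.+1 ->
  pim m n.+1 = pim m n * (1 - m%:R ^+ 2 / n.+1%:R ^+ 2) :> R.
Proof.
move=> mn; rewrite /pim (big_mkcond (fun k => k != m)) big_nat_recr //= eq_sym mn.
by rewrite -big_mkcond.
Qed.

Lemma pim_diag m : pim m.+1 m.+1 = pim m.+1 m :> R.
Proof.
by rewrite /pim (big_mkcond (fun k => k != m.+1)) big_nat_recr //= eqxx mulr1 -big_mkcond.
Qed.

Lemma pim_factorial_lt m n : (n < m)%N ->
  pim m n * (m%:R * (m - n.+1)`!%:R * n`!%:R ^+ 2) = (-1) ^+ n * (m + n)`!%:R :> R.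
Proof.
elim: n => [|n IH] lt_nm.
  rewrite /pim big_geq // mul1r expr0 mul1r fact0 expr1n mulr1 addn0 subn1 -natrM.
  by rewrite -{1}(prednK lt_nm) -factS prednK.
rewrite pimS ?gtn_eqF // one_sub_sqr_ratio ?pnatr_eq0 //.
have IHn := IH (ltnW lt_nm).
rewrite (_ : m - n.+1 = (m - n.+2).+1)%N ?factS ?natrM in IHn; last by lia.
have sub_cast : (m - n.+2).+1%:R = m%:R - n.+1%:R :> R.
  by rewrite -natrB 1?ltnW //; congr _%:R; lia.
rewrite sub_cast in IHn; rewrite addnS !factS !natrM.
transitivity (- (m + n).+1%:R * ((-1) ^+ n * (m + n)`!%:R) : R); last by rewrite exprS; ring.
by rewrite -IHn -!natr1; field; rewrite natr1 pnatr_eq0.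
Qed.

Lemma pim_factorial m n : (0 < m <= n)%N ->
  pim m n * (2 * n`!%:R ^+ 2) = (-1) ^+ m.-1 * ((n - m)`!%:R * (n + m)`!%:R) :> R.
Proof.
case/andP=> m_gt0; elim: n => [|n IH] le_mSn; first by case: m m_gt0 le_mSn.
have [le_mn | gt_mn] := leqP m n; last first.
  have -> : m = n.+1 by apply/eqP; rewrite eqn_leq le_mSn.
  have := @pim_factorial_lt n.+1 n (ltnSn n); rewrite !(subnn n.+1) /= mulr1 => below.
  rewrite mul1r pim_diag addSn !factS !natrM.
  transitivity (2 * n.+1%:R * ((-1) ^+ n * (n.+1 + n)`!%:R) : R); first by rewrite -below; ring.
  rewrite [(n + n.+1)%N]addnC.
  have -> : (n.+1 + n).+1%:R = 2 * n.+1%:R :> R by rewrite -natrM; congr _%:R; lia.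
  by ring.
rewrite pimS ?ltn_eqF // one_sub_sqr_ratio ?pnatr_eq0 // subSn // addSn !factS !natrM.
have -> : (n - m).+1%:R = n.+1%:R - m%:R :> R by rewrite -natrB -?subSn.
have -> : (n + m).+1%:R = n.+1%:R + m%:R :> R by rewrite -natrD addSn.
transitivity ((n.+1%:R - m%:R) * (n.+1%:R + m%:R) *
    ((-1) ^+ m.-1 * ((n - m)`!%:R * (n + m)`!%:R)) : R); last by ring.
by rewrite -(IH le_mn); field; rewrite addrC natr1 pnatr_eq0.
Qed.

Lemma pim_binom_ratio m n : (0 < m <= n)%N ->
  2 * pim m n * binom_ratio n m = (-1) ^+ m.-1 :> R.
Proof.
move=> mn; have fact_neq0 k : k`!%:R != 0 :> R by rewrite pnatr_eq0 -lt0n fact_gt0.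
have D_neq0 : (n - m)`!%:R * (n + m)`!%:R != 0 :> R by rewrite mulf_neq0.
rewrite binom_ratioE; last by case/andP: mn.
by apply: (mulIf D_neq0); rewrite -(@pim_factorial m n mn); field; rewrite !fact_neq0.
Qed.

Lemma alpha1E m n : (0 < m <= n)%N ->
  alpha1 m n = (-1) ^+ m.-1 * 2 * binom_ratio n m / m%:R :> R.
Proof.
move=> mn; have two_c : 2 * binom_ratio n m = (-1) ^+ m.-1 / pim m n :> R.
  by rewrite -(@pim_binom_ratio m n mn) mulrAC mulfK ?pim_neq0.
rewrite -[_ * 2 * _]mulrA two_c mulrA -expr2 sqrr_sign /alpha1.
by rewrite mul1r !div1r invfM mulrC.
Qed.

End PiClosedForm.

Lemma horner_lagrange (K : fieldType) n (x : nat -> K) (p : {poly K}) z :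
  (0 < n)%N -> injective x -> (size p <= n)%N ->
  p.[z] = \sum_(i < n) p.[x i] * \prod_(j < n | j != i) ((z - x j) / (x i - x j)).
Proof.
move=> n_gt0 x_inj size_p.
rewrite {1}(lagrange_gen n_gt0 x_inj size_p) horner_sum; apply: eq_bigr => i _.
rewrite hornerM hornerC lagrangeE //= hornerM hornerC !horner_prod.
congr (_ * _); rewrite prodf_div mulrC.
by congr (_ / _); apply: eq_bigr => j _; rewrite hornerXsubC.
Qed.

Lemma deriv0_symmetric_nodes (R : realType) n (h : R) (Q : {poly R}) :
  (0 < n)%N -> h != 0 -> (size Q <= (2 * n).+1)%N ->
  Q^`().[0] = \sum_(1 <= m < n.+1)
     (Q.[m%:R * h] - Q.[- (m%:R * h)]) / (2 * m%:R * h * pim m n).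
Proof.
move=> n_gt0 h_neq0 size_Q; pose V := odd_poly Q.
have Q_odd_part y : Q.[y] - Q.[- y] = 2 * y * V.[y ^+ 2].
  rewrite -{1 2}(poly_even_odd Q) !(hornerD, hornerM, horner_comp, hornerXn, hornerX).
  by rewrite mulrNN -expr2; ring.
have V0 : Q^`().[0] = V.[0] by rewrite !horner_coef0 coef_deriv coef_odd_poly.
have size_V : (size V <= n)%N.
  apply: leq_trans (size_odd_poly _) _.
  by have := half_leq size_Q; rewrite mul2n -uphalfE uphalf_double.
pose x (i : nat) := (i.+1%:R * h) ^+ 2.
have x_inj : injective x.
  move=> i j; rewrite /x !exprMn => /(mulIf (expf_neq0 2 h_neq0)) /eqP.
  by rewrite -!natrX eqr_nat eqn_sqr => /eqP [].
rewrite V0 (horner_lagrange _ n_gt0 x_inj size_V) [RHS]big_add1 /= big_mkord.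
apply: eq_bigr => i _; rewrite Q_odd_part.
have -> : \prod_(j < n | j != i) ((0 - x j) / (x i - x j)) = (pim i.+1 n)^-1.
  rewrite /pim big_add1 /= big_mkord -prodfV; apply: eq_bigr => j ji; rewrite /x.
  have : j.+1%:R != 0 :> R by rewrite pnatr_eq0.
  have : j.+1%:R ^+ 2 - i.+1%:R ^+ 2 != 0 :> R by rewrite subr_eq0 -!natrX eqr_nat eqn_sqr.
  move: (j.+1%:R : R) (i.+1%:R : R) => a b ab a_neq0.
  have bh : (b * h) ^+ 2 - (a * h) ^+ 2 != 0.
    by rewrite !exprMn -mulrBl mulf_neq0 ?expf_neq0 // subr_eq0 eq_sym -subr_eq0.
  by rewrite one_sub_sqr_ratio // -subr_sqr invf_div; field; rewrite ab bh.
rewrite /x; have := @pim_neq0 R i.+1 n; have : i.+1%:R != 0 :> R by rewrite pnatr_eq0.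
move: (pim i.+1 n) (i.+1%:R : R) => p b b_neq0 p_neq0.
by field; rewrite p_neq0 h_neq0 b_neq0.
Qed.

Section SineNodes.
Variable R : realType.

Lemma sin_even_pihalf i : sin (((2 * i)%:R * pi) / 2) = 0 :> R.
Proof.
have -> : ((2 * i)%:R * pi) / 2 = 0 + pi *+ i :> R by rewrite -mulr_natr natrM; field.
by rewrite (alternatingn (@sinDpi R)) sin0 mulr0.
Qed.

Lemma sin_odd_pihalf i : sin (((2 * i + 1)%:R * pi) / 2) = (-1) ^+ i :> R.
Proof.
have -> : ((2 * i + 1)%:R * pi) / 2 = pi / 2 + pi *+ i :> R.
  by rewrite -mulr_natr natrD natrM; field.
by rewrite (alternatingn (@sinDpi R)) sin_pihalf mulr1.
Qed.

Lemma interp_sin_nodes n (P : {poly R}) m : interp_sin n P -> (m <= n)%N ->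
  P.[m%:R * (pi / 2)] = sin ((m%:R * pi) / 2)
  /\ P.[- (m%:R * (pi / 2))] = sin (- ((m%:R * pi) / 2)).
Proof.
move=> [_ P_nodes] le_mn; rewrite mulrA; split.
  by have := P_nodes m%:Z; rewrite /node => -> //; apply/andP; split; lia.
by have := P_nodes (- m%:Z); rewrite /node mulrNz !mulNr => -> //; apply/andP; split; lia.
Qed.

Lemma deriv0_interp_sin n (P : {poly R}) : (0 < n)%N -> interp_sin n P ->
  P^`().[0] = pi^-1 * \sum_(1 <= m < n.+1)
      alpha1 m n * (sin ((m%:R * pi) / 2) - sin (- ((m%:R * pi) / 2))).
Proof.
move=> n_gt0 P_interp; have pi_neq0 : pi != 0 :> R by rewrite gt_eqF ?pi_gt0.
have h_neq0 : pi / 2 != 0 :> R by rewrite mulf_neq0 // invr_eq0 pnatr_eq0.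
rewrite (deriv0_symmetric_nodes n_gt0 h_neq0 P_interp.1) mulr_sumr.
apply: eq_big_nat => m /andP[m_gt0 m_le]; have [-> ->] := interp_sin_nodes P_interp m_le.
have := @pim_neq0 R m n; have : m%:R != 0 :> R by rewrite pnatr_eq0 -lt0n.
rewrite /alpha1; move: (pim m n) (m%:R : R) (pi : R) pi_neq0 => p x q q_neq0 x_neq0 p_neq0.
by field; rewrite p_neq0 x_neq0 q_neq0.
Qed.

Lemma deriv0_interp_sin_odd n (P : {poly R}) : (0 < n)%N -> interp_sin n P ->
  P^`().[0] = 2 / pi * \sum_(0 <= j < n.+1 | (2 * j + 1 <= n)%N)
                  (-1) ^+ j * alpha1 (2 * j + 1) n.
Proof.
move=> n_gt0 P_interp; rewrite (deriv0_interp_sin n_gt0 P_interp).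
rewrite (eq_bigr (fun m => 2 * (alpha1 m n * sin ((m%:R * pi) / 2)))); last first.
  by move=> m _; rewrite sinN opprK; ring.
rewrite -mulr_sumr sum_odd_terms => [|i]; last by rewrite sin_even_pihalf mulr0.
under eq_bigr do rewrite sin_odd_pihalf mulrC.
by rewrite mulrA [pi^-1 * 2]mulrC.
Qed.

End SineNodes.

Section DerivativeComparison.
Variable R : realType.

Lemma ler_norm_increment (f h df dh : R -> R) (a b : R) : a <= b ->
  (forall x : R, is_derive x 1 f (df x)) -> (forall x : R, is_derive x 1 h (dh x)) ->
  (forall x, x \in `]a, b[ -> `|df x| <= dh x) ->
  `|f b - f a| <= h b - h a.
Proof.
move=> le_ab f_der h_der df_le.
have mono (g dg : R -> R) : (forall x : R, is_derive x 1 g (dg x)) ->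
    (forall x, x \in `]a, b[ -> 0 <= dg x) -> g a <= g b.
  move=> g_der dg_ge0; apply: (@ger0_derive1_ndecr R g a b) => //.
  - by move=> x x_ab; have gx := g_der x; rewrite derive1E derive_val; exact: dg_ge0.
  - by apply: derivable_within_continuous => x _; have gx := g_der x; exact: ex_derive.
have [lo hi] : (h - f) a <= (h - f) b /\ (h + f) a <= (h + f) b.
  split; [apply: (mono _ (dh - df) (fun x => is_deriveB (h_der x) (f_der x)))
         |apply: (mono _ (dh + df) (fun x => is_deriveD (h_der x) (f_der x)))];
    move=> x /df_le; rewrite ler_norml !fctE => /andP[lo_df hi_df].
  - by rewrite subr_ge0.
  - by rewrite -(lerD2l (- dh x)) addr0 addKr.
rewrite !fctE in lo hi; rewrite ler_norml; apply/andP; split; lra.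
Qed.

End DerivativeComparison.

Section Leibniz.
Variable R : realType.

Lemma leibniz_partial_sum J :
  `|\sum_(j < J) (-1) ^+ j / (2 * j + 1)%:R - pi / 4| <= 1 / (2 * J + 1)%:R :> R.
Proof.
(* q' = sum_j (-x^2)^j differs from atan' by at most x^(2J) = g' on [0, 1]. *)
pose q : {poly R} := \sum_(j < J) ((-1) ^+ j / (2 * j + 1)%:R) *: 'X^(2 * j + 1).
pose g : {poly R} := ((2 * J + 1)%:R)^-1 *: 'X^(2 * J + 1).
have odd_coef_deriv (c : R) k x :
    (c / (2 * k + 1)%:R *: 'X^(2 * k + 1))^`().[x] = c * (x ^+ 2) ^+ k.
  rewrite derivZ derivXn hornerZ hornerMn hornerXn addn1 /= -exprM -[x ^+ _ *+ _]mulr_natr.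
  have : (2 * k).+1%:R != 0 :> R by rewrite pnatr_eq0.
  by move: ((2 * k).+1%:R : R) => d d_neq0; field.
have dq x : q^`().[x] = \sum_(j < J) (- x ^+ 2) ^+ j.
  rewrite /q raddf_sum horner_sum; apply: eq_bigr => j _.
  by rewrite odd_coef_deriv [RHS]exprNn.
have dg x : g^`().[x] = (x ^+ 2) ^+ J.
  by rewrite /g -[_^-1]div1r odd_coef_deriv mul1r.
have geom x : q^`().[x] - (1 + x ^+ 2)^-1 = - (- x ^+ 2) ^+ J / (1 + x ^+ 2).
  have pos : 1 + x ^+ 2 != 0 by rewrite gt_eqF // ltr_pwDl // sqr_ge0.
  have S_eq : (1 + x ^+ 2) * \sum_(j < J) (- x ^+ 2) ^+ j = 1 - (- x ^+ 2) ^+ J.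
    by rewrite -[RHS]opprB subrX1 -[RHS]mulNr opprB opprK.
  rewrite dq; move: S_eq; move: (\sum_(j < J) _) ((- x ^+ 2) ^+ J) => S yJ S_eq.
  have -> : S = (1 - yJ) / (1 + x ^+ 2) by rewrite -S_eq mulrC mulKf.
  by field.
have bound x : x \in `]0, 1[ -> `|q^`().[x] - (1 + x ^+ 2)^-1| <= g^`().[x].
  have pos : 0 < 1 + x ^+ 2 by rewrite ltr_pwDl // sqr_ge0.
  move=> _; rewrite geom dg normrM normrN normfV normrX normrN.
  rewrite (ger0_norm (sqr_ge0 x)) (gtr0_norm pos) ler_pdivrMr //.
  by rewrite ler_peMr ?(exprn_ge0 _ (sqr_ge0 x)) // lerDl sqr_ge0.
have q1 : q.[1] = \sum_(j < J) (-1) ^+ j / (2 * j + 1)%:R.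
  by rewrite /q horner_sum; apply: eq_bigr => j _; rewrite hornerZ hornerXn expr1n mulr1.
have q0 : q.[0] = 0.
  by rewrite /q horner_sum big1 // => j _; rewrite hornerZ hornerXn expr0n addn1 mulr0.
have g1 : g.[1] = 1 / (2 * J + 1)%:R by rewrite /g hornerZ hornerXn expr1n mulr1 div1r.
have g0 : g.[0] = 0 by rewrite /g hornerZ hornerXn expr0n addn1 mulr0.
have := ler_norm_increment ler01 (fun x => is_deriveB (is_derive_poly q x) (is_derive1_atan x))
  (fun x => is_derive_poly g x) bound.
by rewrite !fctE q1 q0 g1 g0 atan1 atan0 !subr0.
Qed.

End Leibniz.

Lemma alternating_tail_le (R : realDomainType) (b : nat -> R) :
  (forall j, 0 <= b j) -> (forall j, b j.+1 <= b j) ->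
  forall J K, `|\sum_(J <= j < K) (-1) ^+ j * b j| <= b J.
Proof.
move=> b_ge0 b_decr.
have signed d J : 0 <= (-1) ^+ J * \sum_(J <= j < J + d) (-1) ^+ j * b j <= b J.
  elim: d J => [|d IH] J; first by rewrite addn0 big_geq // mulr0 lexx b_ge0.
  have /andP[lo hi] := IH J.+1; have := b_decr J.
  rewrite addnS -addSn big_ltn ?ltnS ?leq_addr // mulrDr mulrA -expr2 sqrr_sign mul1r.
  rewrite -[(-1) ^+ J * _]opprK -mulNr -mulN1r -exprS.
  move: ((-1) ^+ J.+1 * _) lo hi => s lo hi decr; apply/andP; split; lra.
move=> J K; have [le_JK | lt_KJ] := leqP J K; last by rewrite big_geq ?normr0 // ltnW.
rewrite -(subnKC le_JK); have /andP[lo hi] := signed (K - J)%N J.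
by rewrite -(ger0_norm lo) normrM normrX normrN1 expr1n mul1r in hi.
Qed.

Lemma cvg_two_scale (R : realType) (u e : nat -> R) (d : nat -> nat -> R) (l : R) :
  e @ \oo --> 0 -> (forall J, d J @ \oo --> 0) ->
  (forall J n, (J <= n)%N -> `|l - u n| <= e J + d J n) -> u @ \oo --> l.
Proof.
move=> e_cvg0 d_cvg0 approx; apply/cvgrPdist_le => eps eps_gt0.
have eps2_gt0 : 0 < eps / 2 by rewrite divr_gt0.
have [J _ e_small] := cvgr_dist_le _ _ e_cvg0 _ eps2_gt0.
near=> n.
have := approx J n; have := e_small J (leqnn J).
have : `|0 - d J n| <= eps / 2 by near: n; exact: cvgr_dist_le _ _ (d_cvg0 J) _ eps2_gt0.
have le_Jn : (J <= n)%N by near: n; exact: nbhs_infty_ge.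
rewrite !sub0r !normrN => /ler_normlP[_ dn] /ler_normlP[_ eJ] /(_ le_Jn) dist_le.
lra.
Unshelve. all: by end_near.
Qed.

Definition weighted_leibniz {R : fieldType} (n : nat) : R :=
  \sum_(j < n.+1) (-1) ^+ j * (binom_ratio n (2 * j + 1) / (2 * j + 1)%:R).

Section WeightedLeibniz.
Variable R : realType.
Implicit Types n J : nat.

Lemma deriv0_interp_sin_weighted n (P : {poly R}) : (0 < n)%N -> interp_sin n P ->
  P^`().[0] = 4 / pi * weighted_leibniz n.
Proof.
move=> n_gt0 P_interp; rewrite (deriv0_interp_sin_odd n_gt0 P_interp) big_mkord big_mkcond.
rewrite /weighted_leibniz !mulr_sumr; apply: eq_bigr => j _; case: ifPn => [j_le | j_gt].
  rewrite alpha1E; last by rewrite j_le addn1.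
  by rewrite addn1 /= exprM sqrrN !expr1n mul1r; ring.
by rewrite binom_ratio_gt ?mul0r ?mulr0 //; rewrite -ltnNge in j_gt; lia.
Qed.

Lemma binom_leibniz_head n J :
  `|\sum_(j < J) (-1) ^+ j * (binom_ratio n (2 * j + 1) / (2 * j + 1)%:R)
    - \sum_(j < J) (-1) ^+ j / (2 * j + 1)%:R| <= (2 * J ^ 2)%:R / n.+1%:R :> R.
Proof.
rewrite -sumrB; apply: le_trans (ler_norm_sum _ _ _) _.
apply: (@le_trans _ _ (\sum_(j < J) ((2 * J)%:R / n.+1%:R : R))).
  apply: ler_sum => j _; set m := (2 * j + 1)%N.
  have m_gt0 : 0 < m%:R :> R by rewrite ltr0n /m addn1.
  have m_inv_ge0 : 0 <= m%:R^-1 :> R by rewrite invr_ge0 ltW.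
  have -> : (-1) ^+ j * (binom_ratio n m / m%:R) - (-1) ^+ j / m%:R =
            (-1) ^+ j * ((binom_ratio n m - 1) / m%:R) :> R by ring.
  rewrite normrM normrX normrN1 expr1n mul1r normrM distrC (ger0_norm m_inv_ge0).
  rewrite ger0_norm ?subr_ge0 ?binom_ratio_le1 // ler_pdivrMr // mulrAC ler_pdivlMr ?ltr0n //.
  apply: le_trans (_ : (m ^ 2)%:R <= _).
    by rewrite -ler_pdivlMr ?ltr0n // one_sub_binom_ratio.
  by rewrite -natrM ler_nat /m; have := ltn_ord j; nia.
rewrite sumr_const card_ord -[_ *+ J]mulr_natr mulrAC -natrM.
by rewrite ler_wpM2r ?invr_ge0 // ler_nat; lia.
Qed.

Lemma weighted_leibniz_approx J n : (J <= n)%N ->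
  `|pi / 4 - weighted_leibniz n| <= 2 * harmonic J + (2 * J ^ 2)%:R * harmonic n :> R.
Proof.
move=> le_Jn; pose b j : R := binom_ratio n (2 * j + 1) / (2 * j + 1)%:R.
have b_ge0 j : 0 <= b j by rewrite divr_ge0 ?binom_ratio_ge0.
have b_le j : b j <= 1 / (2 * j + 1)%:R by rewrite ler_wpM2r ?invr_ge0 ?binom_ratio_le1.
have b_decr j : b j.+1 <= b j.
  apply: ler_pM; rewrite ?binom_ratio_ge0 ?invr_ge0 //.
    rewrite (_ : 2 * j.+1 + 1 = (2 * j + 1).+2)%N; last by lia.
    exact: le_trans (binom_ratio_decr _ _ _) (binom_ratio_decr _ _ _).
  by rewrite lef_pV2 ?posrE ?ltr0n ?addn1 // ler_nat; lia.
have -> : weighted_leibniz n =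
    \sum_(j < J) (-1) ^+ j * b j + \sum_(J <= j < n.+1) (-1) ^+ j * b j.
  rewrite /weighted_leibniz -(big_mkord xpredT (fun j => (-1) ^+ j * b j)).
  by rewrite (big_cat_nat _ (n := J)) ?big_mkord //; lia.
have head : `|\sum_(j < J) (-1) ^+ j * b j - \sum_(j < J) (-1) ^+ j / (2 * j + 1)%:R|
    <= (2 * J ^ 2)%:R / n.+1%:R := binom_leibniz_head n J.
have tail := alternating_tail_le b_ge0 b_decr J n.+1.
have leib := leibniz_partial_sum R J; have bJ := b_le J.
have harmonicJ : 1 / (2 * J + 1)%:R <= harmonic J :> R.
  by rewrite /= div1r lef_pV2 ?posrE ?ltr0n ?addn1 // ler_nat; lia.
rewrite /= in harmonicJ *; move: head tail leib bJ harmonicJ.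
move: (\sum_(j < J) _) (\sum_(J <= j < n.+1) _) (\sum_(j < J) (-1) ^+ j / _) => H T L.
move: ((2 * J ^ 2)%:R / _) (1 / _) (J.+1%:R^-1) (b J) (pi / 4) => c e h bJ p.
rewrite !ler_norml => /andP[? ?] /andP[? ?] /andP[? ?] ? ?; apply/andP; split; lra.
Qed.

Lemma cvg_weighted_leibniz : weighted_leibniz n @[n --> \oo] --> (pi / 4 : R).
Proof.
apply: (@cvg_two_scale R _ (fun J => 2 * harmonic J)
  (fun J n => (2 * J ^ 2)%:R * harmonic n)).
- by rewrite -(mulr0 2); apply: cvgM (cvg_cst _) cvg_harmonic.
- by move=> J; rewrite -(mulr0 (2 * J ^ 2)%:R); apply: cvgM (cvg_cst _) cvg_harmonic.
- exact: weighted_leibniz_approx.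
Qed.

End WeightedLeibniz.

Theorem mainTheorem7 (R : realType) :
  (forall (n : nat) (P : {poly R}), (1 <= n)%N -> interp_sin n P ->
     P^`().[0] =
       pi^-1 * \sum_(1 <= m < n.+1)
                 alpha1 m n * (sin ((m%:R * pi) / 2) - sin (- ((m%:R * pi) / 2)))
     /\ P^`().[0] =
       2 / pi * \sum_(0 <= j < n.+1 | (2 * j + 1 <= n)%N)
                  (-1) ^+ j * alpha1 (2 * j + 1) n)
  /\
  (forall P : nat -> {poly R}, (forall n, (1 <= n)%N -> interp_sin n (P n)) ->
     ((fun n : nat => (P n)^`().[0]) @ \oo --> (1 : R))
     /\ (1 : R) = derive1 (@sin R) 0).
Proof.
split=> [n P n_gt0 P_interp | P P_interp].
  by split; [exact: deriv0_interp_sin | exact: deriv0_interp_sin_odd].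
split; last by rewrite derive1E derive_val cos0.
have lim := cvgM (cvg_cst (4 / pi)) (@cvg_weighted_leibniz R).
rewrite (_ : 4 / pi * (pi / 4) = 1) in lim; last first.
  by have := @pi_gt0 R; move: (pi : R) => p p_gt0; field; rewrite gt_eqF.
rewrite -cvg_shiftS (_ : [sequence _]_n = [sequence 4 / pi * weighted_leibniz n.+1]_n).
  by rewrite (cvg_shiftS (fun n => 4 / pi * weighted_leibniz n)); exact: lim.
by apply/funext => n /=; rewrite (deriv0_interp_sin_weighted _ (P_interp n.+1 _)).
Qed.
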